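(* Under the setting of the context, assume (TS1) and let $u$ be the solution of problem (P). Let $x\in\mu_x\mathbb{N}$ and suppose $u(x-\mu_x,t)\ge0$ for all $t\in\mathbb{T}$ and $u(x-\mu_x,t)>0$ for at least one $t\in\mathbb{T}$. Then $u(x,t)\ge0$ for all $t\in\mathbb{T}$.
   Context: A time scale $\mathbb{T}$ is a nonempty closed subset of $\mathbb{R}$; here $\min\mathbb{T}=0$ and $\sup\mathbb{T}=+\infty$. $\sigma(t)=\inf\{s\in\mathbb{T}:s>t\}$ is the forward jump and $\mu_t(t)=\sigma(t)-t$ the graininess; $u^{\Delta_t}$ denotes the (Hilger) delta derivative in $t$. Fix $A>0$, $k>0$, $\mu_x>0$, $\Omega=\mu_x\mathbb{Z}\times\mathbb{T}$, $\mu_x\mathbb{N}=\{\mu_x,2\mu_x,\dots\}$. Problem (P): $u^{\Delta_t}(x,t)+k\frac{u(x,t)-u(x-\mu_x,t)}{\mu_x}=0$ for $(x,t)\in\Omega$, $u(0,0)=A$, $u(x,0)=0$ for $x\ne0$. A solution is $u:\Omega\to\mathbb{R}$ with each $u(x,\cdot)$ delta differentiable on $\mathbb{T}$, satisfying (P), and bounded on $\mu_x\mathbb{Z}\times(\mathbb{T}\cap[0,T_0])$ for every $T_0>0$. Condition (TS1): $1-\frac{k\mu_t(t)}{\mu_x}>0$ for all $t\in\mathbb{T}$. *)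

From Stdlib Require Import Reals Lra Lia ZArith ClassicalEpsilon.
Open Scope R_scope.

Definition closed_set (T : R -> Prop) : Prop :=
  forall x, (forall eps, eps > 0 -> exists t, T t /\ Rabs (t - x) < eps) -> T x.

Definition is_time_scale0 (T : R -> Prop) : Prop :=
  closed_set T /\ T 0 /\ (forall t, T t -> 0 <= t) /\
  (forall M, exists t, T t /\ t > M).

Definition is_inf_after (T : R -> Prop) (t s : R) : Prop :=
  (forall r, T r -> r > t -> s <= r) /\
  (forall b, (forall r, T r -> r > t -> b <= r) -> b <= s).

Definition sigma (T : R -> Prop) (t : R) : R :=
  epsilon (inhabits 0) (fun s => is_inf_after T t s).

Definition graininess (T : R -> Prop) (t : R) : R := sigma T t - t.

Definition delta_deriv (T : R -> Prop) (f : R -> R) (t d : R) : Prop :=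
  forall eps, eps > 0 -> exists delta, delta > 0 /\
    forall s, T s -> Rabs (s - t) < delta ->
      Rabs (f (sigma T t) - f s - d * (sigma T t - s)) <= eps * Rabs (sigma T t - s).

(* Solution of (P). The spatial grid mu_x Z is indexed by n : Z (x = n * mu_x);
   u n t stands for u(n mu_x, t). *)
Definition is_solution_P (T : R -> Prop) (A k mux : R) (u : Z -> R -> R) : Prop :=
  (exists ud : Z -> R -> R,
     forall n t, T t ->
       delta_deriv T (u n) t (ud n t) /\
       ud n t + k * (u n t - u (n - 1)%Z t) / mux = 0) /\
  u 0%Z 0 = A /\
  (forall n, n <> 0%Z -> u n 0 = 0) /\
  (forall T0, T0 > 0 -> exists M, forall n t, T t -> t <= T0 -> Rabs (u n t) <= M).

Definition TS1 (T : R -> Prop) (k mux : R) : Prop :=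
  forall t, T t -> 1 - k * graininess T t / mux > 0.

From Pilot Require Import Defs.
From Stdlib Require Import Reals ZArith.
From Stdlib Require Import Lra Lia Classical ClassicalEpsilon.
Open Scope R_scope.

(* For fixed n put w := u n, v := u (n-1) and a := k/mux > 0;
   the equation reads  w^Delta = a (v - w)  with v >= 0 and w(0) = 0.
   For every e > 0 the perturbed function  g := w + e (1 + t)  stays
   nonnegative on T, which we prove with the induction principle of time
   scales (Bohner-Peterson, Thm 1.7): a property holding at 0 that is
   propagated across right-scattered points (t -> sigma t), to a right
   neighbourhood of right-dense points, and up to left-dense points holds
   everywhere.  The three propagation steps use, respectively, the jump
   formula f(sigma t) = f t + mu(t) f^Delta(t) together with (TS1), the
   definition of the delta derivative at a right-dense point, and
   continuity of delta-differentiable functions.  Letting e -> 0 gives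
   w >= 0.  The file first develops order-completeness facts for subsets
   of T, then the induction principle, then the calculus facts, then the
   comparison argument, and finally derives the theorem. *)

Lemma Rabs_bounds (x y : R) : Rabs x <= y -> - y <= x <= y.
Proof.
  intros H; split.
  - assert (- x <= Rabs x) by (rewrite <- Rabs_Ropp; apply Rle_abs); lra.
  - assert (x <= Rabs x) by apply Rle_abs; lra.
Qed.

Lemma eq_0_of_small (X K : R) :
  0 <= K -> (forall eps, eps > 0 -> Rabs X <= eps * K) -> X = 0.
Proof.
  intros HK Hsmall.
  destruct (Req_dec X 0) as [|HX]; [assumption|].
  assert (Hpos : Rabs X > 0) by (apply Rabs_pos_lt; exact HX).
  set (eps := Rabs X / (2 * (K + 1))).
  assert (Heps : eps > 0) by (unfold eps; apply Rdiv_lt_0_compat; lra).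
  assert (Hlt : eps * K < Rabs X).
  { assert (Heq : eps * (2 * (K + 1)) = Rabs X) by (unfold eps; field; lra).
    nra. }
  specialize (Hsmall eps Heps); lra.
Qed.

Lemma nonneg_of_perturbations (x c : R) :
  c > 0 -> (forall e, e > 0 -> x + e * c >= 0) -> x >= 0.
Proof.
  intros Hc H.
  destruct (Rle_or_lt 0 x) as [|Hx]; [lra|].
  assert (He : - x / (2 * c) > 0) by (apply Rdiv_lt_0_compat; lra).
  specialize (H _ He).
  replace (- x / (2 * c) * c) with (- x / 2) in H by (field; lra).
  lra.
Qed.

Lemma lub_approx (E : R -> Prop) :
  (exists y, E y) -> (exists M, forall y, E y -> y <= M) ->
  exists m, (forall y, E y -> y <= m) /\
            (forall r, r > 0 -> exists y, E y /\ m - r < y).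
Proof.
  intros [y0 Hy0] [M HM].
  destruct (completeness E) as [m [Hub Hlub]].
  { exists M; exact HM. }
  { exists y0; exact Hy0. }
  exists m; split; [exact Hub|].
  intros r Hr; apply NNPP; intros Hnone.
  assert (m <= m - r); [|lra].
  apply Hlub; intros y Hy.
  destruct (Rle_or_lt y (m - r)) as [|Hgt]; [assumption|].
  exfalso; apply Hnone; exists y; split; assumption.
Qed.

Lemma glb_approx (E : R -> Prop) :
  (exists y, E y) -> (exists M, forall y, E y -> M <= y) ->
  exists c, (forall y, E y -> c <= y) /\
            (forall r, r > 0 -> exists y, E y /\ y < c + r).
Proof.
  intros [y0 Hy0] [M HM].
  destruct (lub_approx (fun y => E (- y))) as [m [Hub Happ]].
  { exists (- y0); rewrite Ropp_involutive; exact Hy0. }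
  { exists (- M); intros y Hy; specialize (HM _ Hy); lra. }
  exists (- m); split.
  - intros y Hy. assert (- y <= m); [|lra].
    apply Hub; rewrite Ropp_involutive; exact Hy.
  - intros r Hr. destruct (Happ r Hr) as [y [Hy Hlt]].
    exists (- y); split; [exact Hy | lra].
Qed.

Lemma sigma_eq (T : R -> Prop) (t s : R) :
  is_inf_after T t s -> Defs.sigma T t = s.
Proof.
  intros Hs. unfold sigma.
  assert (Hchosen : is_inf_after T t (epsilon (inhabits 0) (is_inf_after T t))).
  { apply epsilon_spec; exists s; exact Hs. }
  destruct Hs as [Hs1 Hs2], Hchosen as [Hc1 Hc2].
  apply Rle_antisym; [apply Hs2 | apply Hc2]; assumption.
Qed.

Definition left_dense (T : R -> Prop) (t : R) : Prop :=
  forall eps, eps > 0 -> exists s, T s /\ t - eps < s < t.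

Section InfimumOfFailures.
Variables (T P : R -> Prop).
Hypothesis HT : is_time_scale0 T.

Lemma inf_of_failures (t0 : R) :
  T t0 -> ~ P t0 ->
  exists c, T c /\
    (forall s, T s -> s < c -> P s) /\
    (forall r, r > 0 -> exists s, T s /\ c <= s < c + r /\ ~ P s).
Proof.
  intros Ht0 Hfail.
  destruct HT as [Hclosed [_ [Hnonneg _]]].
  destruct (glb_approx (fun s => T s /\ s <= t0 /\ ~ P s)) as [c [Hlow Happ]].
  { exists t0; repeat split; auto; lra. }
  { exists 0; intros s [Ts _]; apply Hnonneg; exact Ts. }
  assert (Hfail_near : forall r, r > 0 ->
            exists s, T s /\ c <= s < c + r /\ ~ P s).
  { intros r Hr. destruct (Happ r Hr) as [s [[Ts [Hst0 HPs]] Hlt]].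
    assert (c <= s) by (apply Hlow; auto).
    exists s; auto. }
  assert (Hct0 : c <= t0) by (apply Hlow; repeat split; auto; lra).
  exists c; split; [|split; [|exact Hfail_near]].
  - apply Hclosed; intros eps Heps.
    destruct (Hfail_near eps Heps) as [s [Ts [Hs _]]].
    exists s; split; [exact Ts|]. rewrite Rabs_right; lra.
  - intros s Ts Hsc. apply NNPP; intros HPs.
    assert (c <= s) by (apply Hlow; repeat split; auto; lra).
    lra.
Qed.
End InfimumOfFailures.

(* For a positive point c of T, the points of T strictly before c have a
   supremum rho; either rho = c (c is left-dense) or rho lies in T and
   jumps to c. *)
Lemma left_dense_or_jump_to (T : R -> Prop) (c : R) :
  is_time_scale0 T -> T c -> 0 < c ->
  left_dense T c \/
  exists rho, T rho /\ rho < c /\ Defs.sigma T rho = c.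
Proof.
  intros [Hclosed [HT0 _]] Tc Hc.
  destruct (lub_approx (fun s => T s /\ s < c)) as [rho [Hup Happ]].
  { exists 0; split; assumption. }
  { exists c; intros s [_ Hs]; lra. }
  assert (Hrc : rho <= c).
  { destruct (Rle_or_lt rho c) as [|Hlt]; [assumption|].
    destruct (Happ (rho - c) ltac:(lra)) as [s' [[_ Hs'c] Hlt']]; lra. }
  destruct (Req_dec rho c) as [Heq | Hneq].
  - left; intros eps Heps.
    destruct (Happ eps Heps) as [s [[Ts Hsc] Hlt]].
    exists s; split; [exact Ts | lra].
  - right; exists rho.
    assert (Trho : T rho).
    { apply Hclosed; intros eps Heps.
      destruct (Happ eps Heps) as [s [Hs Hlt]].
      exists s; split; [apply Hs|].
      assert (s <= rho) by (apply Hup; exact Hs).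
      rewrite Rabs_left1; lra. }
    split; [exact Trho | split; [lra|]].
    apply sigma_eq; split.
    + intros r Tr Hr. destruct (Rle_or_lt c r) as [|Hrc']; [assumption|].
      assert (r <= rho) by (apply Hup; auto); lra.
    + intros b Hb. apply Hb; [exact Tc | lra].
Qed.

Lemma time_scale_induction (T P : R -> Prop) :
  is_time_scale0 T ->
  P 0 ->
  (forall t, T t -> Defs.sigma T t > t -> P t -> P (Defs.sigma T t)) ->
  (forall t, T t -> Defs.sigma T t = t -> P t ->
     exists delta, delta > 0 /\ forall s, T s -> t < s < t + delta -> P s) ->
  (forall t, T t -> 0 < t -> left_dense T t ->
     (forall s, T s -> s < t -> P s) -> P t) ->
  forall t, T t -> P t.
Proof.
  intros HT HP0 Hscattered Hright Hleft t0 Tt0.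
  apply NNPP; intros Hfail.
  destruct (inf_of_failures T P HT t0 Tt0 Hfail) as [c [Tc [Hbelow Hnear]]].
  destruct (classic (P c)) as [HPc | HPc].
  - (* failures accumulate at c from the right, so c is right-dense *)
    assert (Hafter : forall r, r > 0 -> exists s, T s /\ c < s < c + r /\ ~ P s).
    { intros r Hr. destruct (Hnear r Hr) as [s [Ts [[Hcs Hsr] HPs]]].
      exists s; repeat split; auto.
      destruct (Req_dec c s) as [<-|]; [contradiction | lra]. }
    assert (Hsig : Defs.sigma T c = c).
    { apply sigma_eq; split; [intros; lra|].
      intros b Hb. destruct (Rle_or_lt b c) as [|Hbc]; [assumption|].
      destruct (Hafter (b - c) ltac:(lra)) as [s [Ts [Hs _]]].
      assert (b <= s) by (apply Hb; [exact Ts | lra]); lra. }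
    destruct (Hright c Tc Hsig HPc) as [delta [Hdelta Hnbhd]].
    destruct (Hafter delta Hdelta) as [s [Ts [Hs HPs]]].
    apply HPs, Hnbhd; assumption.
  - (* the first failure c is positive and reached from the left *)
    assert (Hc : 0 < c).
    { destruct HT as [_ [_ [Hnonneg _]]].
      destruct (Req_dec c 0) as [->|]; [contradiction|].
      assert (0 <= c) by (apply Hnonneg; exact Tc); lra. }
    apply HPc.
    destruct (left_dense_or_jump_to T c HT Tc Hc) as [Hld | [rho [Trho [Hrho Hsig]]]].
    + apply Hleft; assumption.
    + rewrite <- Hsig. apply Hscattered; [exact Trho | lra | apply Hbelow; assumption].
Qed.

Lemma delta_deriv_jump (T : R -> Prop) (f : R -> R) (t d : R) :
  T t -> delta_deriv T f t d ->
  f (Defs.sigma T t) = f t + d * (Defs.sigma T t - t).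
Proof.
  intros Tt Hd.
  assert (Hzero : f (Defs.sigma T t) - f t - d * (Defs.sigma T t - t) = 0).
  { apply (eq_0_of_small _ (Rabs (Defs.sigma T t - t))); [apply Rabs_pos|].
    intros eps Heps. destruct (Hd eps Heps) as [delta [Hdelta Hnear]].
    apply Hnear; [exact Tt|]. rewrite Rminus_diag, Rabs_R0; exact Hdelta. }
  lra.
Qed.

Lemma delta_deriv_continuous (T : R -> Prop) (f : R -> R) (t d : R) :
  T t -> delta_deriv T f t d ->
  forall eps, eps > 0 -> exists delta, delta > 0 /\
    forall s, T s -> Rabs (s - t) < delta -> Rabs (f s - f t) <= eps.
Proof.
  intros Tt Hd eps Heps.
  set (st := Defs.sigma T t).
  set (M := Rabs (st - t)).
  assert (HM : 0 <= M) by apply Rabs_pos.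
  assert (Hdpos : 0 <= Rabs d) by apply Rabs_pos.
  set (e1 := eps / (2 * (2 * M + 1))).
  assert (He1 : e1 > 0) by (unfold e1; apply Rdiv_lt_0_compat; lra).
  destruct (Hd e1 He1) as [delta1 [Hdelta1 Hnear]].
  set (r := eps / (2 * (Rabs d + 1))).
  assert (Hr : r > 0) by (unfold r; apply Rdiv_lt_0_compat; lra).
  exists (Rmin delta1 (Rmin 1 r)); split; [repeat apply Rmin_pos; lra|].
  intros s Ts Hst.
  assert (Hs1 : Rabs (s - t) < delta1) by (eapply Rlt_le_trans; [exact Hst | apply Rmin_l]).
  assert (Hsmall : Rabs (s - t) <= Rmin 1 r) by (eapply Rle_trans; [left; exact Hst | apply Rmin_r]).
  assert (Hs_le1 : Rabs (s - t) <= 1) by (eapply Rle_trans; [exact Hsmall | apply Rmin_l]).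
  assert (Hs_ler : Rabs (s - t) <= r) by (eapply Rle_trans; [exact Hsmall | apply Rmin_r]).
  (* compare the difference quotients from s and from t to sigma t *)
  assert (Hfrom_s := Hnear s Ts Hs1).
  assert (Hfrom_t := Hnear t Tt ltac:(rewrite Rminus_diag, Rabs_R0; exact Hdelta1)).
  fold st in Hfrom_s, Hfrom_t. fold M in Hfrom_t.
  assert (Hdist : Rabs (st - s) <= M + 1).
  { replace (st - s) with ((st - t) - (s - t)) by ring.
    eapply Rle_trans; [apply Rabs_triang|]. rewrite Rabs_Ropp; fold M; lra. }
  assert (Hlin : Rabs (d * (s - t)) <= eps / 2).
  { rewrite Rabs_mult.
    assert (Rabs d * Rabs (s - t) <= Rabs d * r) by (apply Rmult_le_compat_l; lra).
    assert (Rabs d * r <= eps / 2); [|lra].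
    assert (Heq : (Rabs d + 1) * r = eps / 2) by (unfold r; field; lra).
    nra. }
  assert (Herr : e1 * Rabs (st - s) + e1 * M <= eps / 2).
  { assert (Heq : e1 * (2 * M + 1) = eps / 2) by (unfold e1; field; lra).
    nra. }
  replace (f s - f t) with
      (d * (s - t) + (f st - f t - d * (st - t)) - (f st - f s - d * (st - s))) by ring.
  apply Rabs_bounds in Hfrom_s. apply Rabs_bounds in Hfrom_t. apply Rabs_bounds in Hlin.
  apply Rabs_le; lra.
Qed.

Section Comparison.
Variables (T : R -> Prop) (a : R) (w v wd : R -> R).
Hypothesis HT : is_time_scale0 T.
Hypothesis Ha : a > 0.
Hypothesis HTS : forall t, T t -> 1 - a * graininess T t > 0.
Hypothesis Hdiff : forall t, T t -> delta_deriv T w t (wd t).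
Hypothesis Hequation : forall t, T t -> wd t = a * (v t - w t).
Hypothesis Hv : forall t, T t -> v t >= 0.
Hypothesis Hw0 : w 0 = 0.

Definition perturbed (e t : R) : R := w t + e * (1 + t).

Lemma time_nonneg (t : R) : T t -> 0 <= t.
Proof. destruct HT as [_ [_ [Hnonneg _]]]; apply Hnonneg. Qed.

(* Across a jump, (TS1) makes the explicit Euler step preserve nonnegativity. *)
Lemma perturbed_jump (e : R) : e > 0 ->
  forall t, T t -> Defs.sigma T t > t ->
  0 <= perturbed e t -> 0 <= perturbed e (Defs.sigma T t).
Proof.
  intros He t Tt Hjump Hgt. unfold perturbed in *.
  assert (Hstep := delta_deriv_jump T w t (wd t) Tt (Hdiff t Tt)).
  rewrite Hequation in Hstep by exact Tt.
  assert (Hcfl := HTS t Tt). unfold graininess in Hcfl.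
  assert (Ht := time_nonneg t Tt). assert (Hvt := Hv t Tt).
  set (mu := Defs.sigma T t - t) in *.
  rewrite Hstep.
  replace (Defs.sigma T t) with (t + mu) by (unfold mu; ring).
  (* w(t+mu) + e(1+t+mu) = g(t)(1 - a mu) + a mu (e(1+t) + v t) + e mu *)
  assert (0 <= (w t + e * (1 + t)) * (1 - a * mu)) by (apply Rmult_le_pos; lra).
  assert (0 <= a * mu * (e * (1 + t) + v t)) by (repeat apply Rmult_le_pos; unfold mu in *; nra).
  assert (0 <= e * mu) by (apply Rmult_le_pos; unfold mu in *; lra).
  nra.
Qed.

(* At a right-dense point the derivative controls w on a right neighbourhood. *)
Lemma perturbed_right_dense (e : R) : e > 0 ->
  forall t, T t -> Defs.sigma T t = t -> 0 <= perturbed e t ->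
  exists delta, delta > 0 /\
    forall s, T s -> t < s < t + delta -> 0 <= perturbed e s.
Proof.
  intros He t Tt Hdense Hgt.
  destruct (Hdiff t Tt e He) as [delta [Hdelta Hnear]].
  assert (Hia : / a > 0) by (apply Rinv_0_lt_compat; lra).
  exists (Rmin delta (/ a)); split; [apply Rmin_pos; lra|].
  intros s Ts [Hts Hsd].
  assert (Hd := Rmin_l delta (/ a)). assert (Hi := Rmin_r delta (/ a)).
  specialize (Hnear s Ts ltac:(rewrite Rabs_right; lra)).
  rewrite Hdense, Hequation in Hnear by exact Tt.
  rewrite (Rabs_left (t - s)) in Hnear by lra.
  apply Rabs_bounds in Hnear.
  assert (Hht := time_nonneg t Tt). assert (Hvt := Hv t Tt).
  unfold perturbed in *.
  set (h := s - t) in *.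
  assert (Hah : a * h < 1).
  { assert (Hlt : h < / a) by (unfold h; lra).
    apply (Rmult_lt_compat_l a) in Hlt; [|lra]. rewrite Rinv_r in Hlt; lra. }
  assert (Hs : s = t + h) by (unfold h; ring).
  assert (Hh : 0 < h) by (unfold h; lra).
  clearbody h; subst s.
  (* w(t+h) >= w t + a (v t - w t) h - e h *)
  assert (0 <= (w t + e * (1 + t)) * (1 - a * h)) by (apply Rmult_le_pos; lra).
  assert (0 <= a * h * (e * (1 + t) + v t)) by (repeat apply Rmult_le_pos; nra).
  nra.
Qed.

(* Continuity of w carries nonnegativity up to a left-dense point. *)
Lemma perturbed_left_dense (e : R) : e > 0 ->
  forall t, T t -> left_dense T t ->
  (forall s, T s -> s < t -> 0 <= perturbed e s) -> 0 <= perturbed e t.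
Proof.
  intros He t Tt Hld Hbefore.
  destruct (Rle_or_lt 0 (perturbed e t)) as [|Hneg]; [assumption|].
  exfalso.
  destruct (delta_deriv_continuous T w t (wd t) Tt (Hdiff t Tt)
              (- perturbed e t / 2) ltac:(lra)) as [delta [Hdelta Hcont]].
  destruct (Hld delta Hdelta) as [s [Ts [Hs1 Hs2]]].
  assert (Hclose := Hcont s Ts ltac:(rewrite Rabs_left; lra)).
  apply Rabs_bounds in Hclose.
  assert (Hgs := Hbefore s Ts Hs2).
  unfold perturbed in *.
  assert (e * s < e * t) by (apply Rmult_lt_compat_l; lra).
  lra.
Qed.

Lemma perturbed_nonneg (e : R) : e > 0 -> forall t, T t -> 0 <= perturbed e t.
Proof.
  intros He.
  apply time_scale_induction; [exact HT | | | |].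
  - unfold perturbed. rewrite Hw0. lra.
  - exact (perturbed_jump e He).
  - exact (perturbed_right_dense e He).
  - intros t Tt _. exact (perturbed_left_dense e He t Tt).
Qed.

Lemma comparison_nonneg : forall t, T t -> w t >= 0.
Proof.
  intros t Tt.
  apply (nonneg_of_perturbations (w t) (1 + t)).
  - assert (Ht := time_nonneg t Tt); lra.
  - intros e He. assert (H := perturbed_nonneg e He t Tt).
    unfold perturbed in H; lra.
Qed.
End Comparison.

Theorem mainTheorem8 (T : R -> Prop) (A k mux : R) (u : Z -> R -> R) (n : Z) :
  is_time_scale0 T -> A > 0 -> k > 0 -> mux > 0 ->
  TS1 T k mux ->
  is_solution_P T A k mux u ->
  (1 <= n)%Z ->
  (forall t, T t -> u (n - 1)%Z t >= 0) ->
  (exists t, T t /\ u (n - 1)%Z t > 0) ->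
  forall t, T t -> u n t >= 0.
Proof.
  intros HT _ Hk Hmux HTS [[ud Hud] [_ [Hinit _]]] Hn Hprev _.
  (* row n solves  w^Delta = (k/mux) (u(n-1) - w)  with w(0) = 0 *)
  apply (comparison_nonneg T (k / mux) (u n) (u (n - 1)%Z) (ud n) HT).
  - apply Rdiv_lt_0_compat; lra.
  - intros t Tt. specialize (HTS t Tt). unfold Rdiv in *. lra.
  - intros t Tt. exact (proj1 (Hud n t Tt)).
  - intros t Tt. destruct (Hud n t Tt) as [_ Heq]. unfold Rdiv in *. lra.
  - exact Hprev.
  - apply Hinit; lia.
Qed.
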